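(* Let $\mathbf x\in\mathbb F^6$ have at most one nonzero coordinate. Then $\mathcal O_{\mathbf x}$ is regular in arity $4$ if and only if either $\mathbf x=(1,0,0,0,0,0)$ (the associative relation $(a_1a_2)a_3=a_1(a_2a_3)$) or $\mathbf x=(0,0,0,0,s,0)$ with $s\neq\pm1$ (the relation $(a_1a_2)a_3=s\,a_3(a_1a_2)$, which for $s=0$ is the left-nilpotent relation $(a_1a_2)a_3=0$).
   Context: Let $\mathbb F$ be a field of characteristic $0$. Let $\mathcal T$ be the free symmetric operad over $\mathbb F$ generated by one binary operation $(a_1,a_2)\mapsto a_1a_2$ with no symmetry; its arity-$n$ component $\mathcal T(n)$ is the vector space with basis all multilinear bracketed (nonassociative) monomials in $a_1,\dots,a_n$, with the right $S_n$-action permuting arguments. For $\mathbf x=(x_1,\dots,x_6)\in\mathbb F^6$, $\mathcal O_{\mathbf x}$ denotes the quotient of $\mathcal T$ by the operad ideal $\mathcal J_{\mathbf x}$ generated by the relation (LR): $(a_1a_2)a_3 = x_1a_1(a_2a_3)+x_2a_1(a_3a_2)+x_3a_2(a_1a_3)+x_4a_2(a_3a_1)+x_5a_3(a_1a_2)+x_6a_3(a_2a_1)$. $\mathcal O_{\mathbf x}$ is regular in arity $4$ if $\mathcal O_{\mathbf x}(4)\cong\mathbb FS_4$ as $S_4$-modules. *)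

From HB Require Import structures.
From mathcomp Require Import all_boot all_order all_fingroup all_algebra.
Set Implicit Arguments. Unset Strict Implicit. Unset Printing Implicit Defensive.
Import Order.TTheory GRing.Theory Num.Theory.
Local Open Scope ring_scope.

(* Nonassociative bracketed monomials: leaves are letters a_{i+1} encoded by i. *)
Inductive tm := V of nat | M of tm & tm.

Fixpoint tm_eqb (s t : tm) : bool :=
  match s, t with
  | V i, V j => i == j
  | M s1 s2, M t1 t2 => tm_eqb s1 t1 && tm_eqb s2 t2
  | _, _ => false
  end.

Lemma tm_eqP : Equality.axiom tm_eqb.
Proof.
elim=> [i|s1 IH1 s2 IH2] [j|t1 t2] /=; try by constructor.
- by apply: (iffP eqP) => [->|[]].
- by apply: (iffP andP) => [[/IH1 -> /IH2 ->]|[<- <-]]; split; [apply/IH1|apply/IH2].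
Qed.

HB.instance Definition _ := hasDecEq.Build tm tm_eqP.

Fixpoint leaves (t : tm) : seq nat :=
  match t with V i => [:: i] | M s u => leaves s ++ leaves u end.

(* t is a multilinear monomial in a_1, ..., a_n (a basis element of T(n)). *)
Definition multilin (n : nat) (t : tm) : bool := perm_eq (leaves t) (iota 0 n).

(* Formal linear combinations of monomials; elements of the free vector space
   are compared through their coefficient functions. *)
Definition fsum (F : fieldType) := seq (F * tm).

Definition coef (F : fieldType) (l : fsum F) (t : tm) : F :=
  \sum_(p <- l) (if p.2 == t then p.1 else 0).

(* l is (a representative of) an element of T(n). *)
Definition inT (F : fieldType) (n : nat) (l : fsum F) : bool :=
  all (fun p => multilin n p.2) l.

(* LHS - RHS of the relation (LR) evaluated at monomials u, v, w. *)
Definition relLR (F : fieldType) (x : 'I_6 -> F) (u v w : tm) : fsum F :=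
  [:: (1, M (M u v) w);
      (- x (inord 0), M u (M v w)); (- x (inord 1), M u (M w v));
      (- x (inord 2), M v (M u w)); (- x (inord 3), M v (M w u));
      (- x (inord 4), M w (M u v)); (- x (inord 5), M w (M v u))].

Inductive ctx := Hole | CL of ctx & tm | CR of tm & ctx.

Fixpoint plug (c : ctx) (s : tm) : tm :=
  match c with
  | Hole => s
  | CL c' t => M (plug c' s) t
  | CR t c' => M t (plug c' s)
  end.

(* The generator of J indexed by a context c and monomials u, v, w:
   c[ r(u,v,w) ]. *)
Definition genJ (F : fieldType) (x : 'I_6 -> F) (g : ctx * tm * tm * tm) : fsum F :=
  let: (c, u, v, w) := g in [seq (p.1, plug c p.2) | p <- relLR x u v w].

Definition validJ (n : nat) (g : ctx * tm * tm * tm) : bool :=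
  let: (c, u, v, w) := g in multilin n (plug c (M (M u v) w)).

(* Membership in the arity-n component J_x(n) of the operad ideal generated by
   (LR): the span of all c[r(u,v,w)] which are multilinear of arity n. *)
Definition inJ (F : fieldType) (x : 'I_6 -> F) (n : nat) (l : fsum F) : Prop :=
  exists gs : seq (F * (ctx * tm * tm * tm)),
    all (fun q => validJ n q.2) gs /\
    forall t, coef l t = coef (flatten [seq [seq (q.1 * p.1, p.2) | p <- genJ x q.2] | q <- gs]) t.

(* Right S_4-action on monomials: relabel letters through sigma. *)
Definition relab (s : {perm 'I_4}) (i : nat) : nat :=
  if (i < 4)%N then val (s (inord i)) else i.

Fixpoint act4 (s : {perm 'I_4}) (t : tm) : tm :=
  match t with V i => V (relab s i) | M a b => M (act4 s a) (act4 s b) end.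

(* The group algebra F S_4 (functions S_4 -> F, delta_tau <-> tau) with the
   regular action delta_tau . sigma = delta_(tau * sigma)
   (this matches act4: act4 s1 (act4 s2 t) = act4 (s2 * s1) t). *)
Notation FS4 F := {ffun {perm 'I_4} -> F}.

Definition regact (F : fieldType) (s : {perm 'I_4}) (f : FS4 F) : FS4 F :=
  [ffun tau => f (tau * s^-1)%g].

Definition linext (F : fieldType) (phi : tm -> FS4 F) (l : fsum F) : FS4 F :=
  [ffun tau => \sum_(p <- l) p.1 * phi p.2 tau].

(* O_x(4) = T(4)/J_x(4) is isomorphic to F S_4 as S_4-modules: there is an
   S_4-equivariant surjective linear map T(4) -> F S_4 whose kernel is J_x(4). *)
Definition regular4 (F : fieldType) (x : 'I_6 -> F) : Prop :=
  exists phi : tm -> FS4 F,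
    [/\ forall (s : {perm 'I_4}) t, multilin 4 t -> phi (act4 s t) = regact s (phi t),
        forall f : FS4 F, exists l, inT 4 l /\ linext phi l = f &
        forall l, inT 4 l -> (linext phi l = [ffun => 0] <-> inJ x 4 l)].

(* When x has a single nonzero coordinate t, relation (LR) is a rewriting rule
   (a1 a2) a3 -> t m(a1, a2, a3) for one monomial m.  In arity 4 it rewrites every
   monomial to a multiple of a right comb a(b(cd)) -- or, for x = t e_6, of a balanced
   monomial (ab)(cd) -- so O_x(4) is spanned by 24 normal forms labelled by S_4.
   For the associative relation and for (a1 a2) a3 = t a3 (a1 a2) with t^2 <> 1 the
   coefficients of these normal forms are linear forms that vanish on J_x(4); this
   gives the S_4-isomorphism O_x(4) = F S_4.  Otherwise, for t <> 0, either rewriting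
   ((a1 a2) a3) a4 in the two possible ways gives a linear relation between distinct
   normal forms (for x = t e_6 it puts the right combs in J_x(4), and one rewriting
   step then relates two balanced monomials), so dim O_x(4) < 24; or t = +-1 and
   x = t e_5 or t e_6, and one more linear form, supported on balanced monomials,
   vanishes on J_x(4), so dim O_x(4) > 24. *)

From HB Require Import structures.
From mathcomp Require Import all_boot all_order all_fingroup all_algebra.
From mathcomp Require Import zify ring.
Set Implicit Arguments. Unset Strict Implicit. Unset Printing Implicit Defensive.
Import GRing.Theory.
Local Open Scope ring_scope.

(** * Formal sums and the ideal J *)

Section FormalSums.
Variable F : fieldType.
Implicit Types (x : 'I_6 -> F) (l : fsum F) (m : tm) (c : F).

Definition scl {T : Type} c (l : seq (F * T)) : seq (F * T) :=
  [seq (c * p.1, p.2) | p <- l].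

Definition lin (g : tm -> F) l : F := \sum_(p <- l) p.1 * g p.2.

Lemma ifE (b : bool) c : (if b then c else 0) = c * b%:R.
Proof. by rewrite -mulrb mulr_natr. Qed.

Lemma coef_nil m : coef [::] m = 0 :> F.
Proof. by rewrite /coef big_nil. Qed.

Lemma coef_cons p l m : coef (p :: l) m = (if p.2 == m then p.1 else 0) + coef l m.
Proof. by rewrite /coef big_cons. Qed.

Lemma coef_cat l1 l2 m : coef (l1 ++ l2) m = coef l1 m + coef l2 m.
Proof. by rewrite /coef big_cat. Qed.

Lemma coef_scl c l m : coef (scl c l) m = c * coef l m.
Proof.
by rewrite /coef big_map big_distrr; apply: eq_bigr => p _ /=; rewrite !ifE mulrA.
Qed.

Lemma inJE x n l :
  inJ x n l <-> exists gs : seq (F * (ctx * tm * tm * tm)),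
    all (fun q => validJ n q.2) gs /\
    forall m, coef l m = \sum_(q <- gs) q.1 * coef (genJ x q.2) m.
Proof.
have flatE (gs : seq (F * (ctx * tm * tm * tm))) m :
    coef (flatten [seq scl q.1 (genJ x q.2) | q <- gs]) m
    = \sum_(q <- gs) q.1 * coef (genJ x q.2) m.
  elim: gs => [|q gs IH]; first by rewrite coef_nil big_nil.
  by rewrite /= coef_cat IH big_cons coef_scl.
by split=> -[gs [vgs E]]; exists gs; split=> // m; rewrite E flatE.
Qed.

Lemma inJ_ext x n l l' : coef l =1 coef l' -> inJ x n l -> inJ x n l'.
Proof. by move=> E /inJE[gs [vgs E']]; apply/inJE; exists gs; split=> // m; rewrite -E. Qed.

Lemma inJ_nil x n : inJ x n [::].
Proof. by apply/inJE; exists [::]; split=> // m; rewrite coef_nil big_nil. Qed.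

Lemma inJ_cat x n l1 l2 : inJ x n l1 -> inJ x n l2 -> inJ x n (l1 ++ l2).
Proof.
move=> /inJE[g1 [v1 E1]] /inJE[g2 [v2 E2]]; apply/inJE; exists (g1 ++ g2).
by split=> [|m]; rewrite ?all_cat ?v1 ?v2 // coef_cat E1 E2 big_cat.
Qed.

Lemma inJ_scl x n c l : inJ x n l -> inJ x n (scl c l).
Proof.
move=> /inJE[g [vg E]]; apply/inJE; exists (scl c g); split=> [|m].
  by rewrite all_map.
by rewrite coef_scl E big_map big_distrr; apply: eq_bigr => q _ /=; rewrite mulrA.
Qed.

Lemma inJ_flatten x n (L : seq (fsum F)) :
  (forall l, l \in L -> inJ x n l) -> inJ x n (flatten L).
Proof.
elim: L => [_|l L IH JL]; first exact: inJ_nil.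
apply: inJ_cat; first by apply: JL; rewrite mem_head.
by apply: IH => l' l'L; apply: JL; rewrite inE l'L orbT.
Qed.

Lemma lin_cat g l1 l2 : lin g (l1 ++ l2) = lin g l1 + lin g l2.
Proof. by rewrite /lin big_cat. Qed.

Lemma lin_scl g c l : lin g (scl c l) = c * lin g l.
Proof. by rewrite /lin big_map big_distrr; apply: eq_bigr => p _ /=; rewrite mulrA. Qed.

Lemma lin_flatten g (L : seq (fsum F)) : lin g (flatten L) = \sum_(l <- L) lin g l.
Proof.
by elim: L => [|l L IH]; rewrite ?big_nil /lin ?big_nil // big_cons -IH -lin_cat.
Qed.

Lemma lin_coef g l (S : seq tm) :
  uniq S -> {subset map snd l <= S} -> lin g l = \sum_(m <- S) coef l m * g m.
Proof.
move=> uS; elim: l => [_|p l IH sub].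
  by rewrite /lin big_nil big1 // => m _; rewrite coef_nil mul0r.
have pS : p.2 \in S by apply: sub; rewrite mem_head.
rewrite /lin big_cons -/(lin g l) IH => [|m ml]; last by apply: sub; rewrite inE ml orbT.
under [RHS]eq_bigr do rewrite coef_cons mulrDl ifE mulrAC -ifE.
rewrite big_split /=; congr (_ + _).
rewrite (bigD1_seq p.2) //= eqxx big1 ?addr0 // => m.
by rewrite eq_sym => /negbTE ->.
Qed.

Lemma lin_ext g l l' : coef l =1 coef l' -> lin g l = lin g l'.
Proof.
move=> E; set S := undup (map snd (l ++ l')).
have uS : uniq S by exact: undup_uniq.
rewrite (@lin_coef g l S) ?(@lin_coef g l' S) //.
- by apply: eq_bigr => m _; rewrite E.
- by move=> m; rewrite mem_undup map_cat mem_cat orbC => ->.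
- by move=> m; rewrite mem_undup map_cat mem_cat => ->.
Qed.

Definition killsJ x (g : tm -> F) := forall G, validJ 4 G -> lin g (genJ x G) = 0.

Lemma lin_inJ x g l : killsJ x g -> inJ x 4 l -> lin g l = 0.
Proof.
move=> Kg /inJE[gs [vgs E]].
rewrite (lin_ext g (l' := flatten [seq scl q.1 (genJ x q.2) | q <- gs])).
  rewrite lin_flatten big_map; elim: gs vgs {E} => [|q gs IH /andP[vq vgs]].
    by rewrite big_nil.
  by rewrite big_cons IH // lin_scl Kg // mulr0 addr0.
move=> m; rewrite E; elim: (gs) => [|q gs' IH]; first by rewrite big_nil coef_nil.
by rewrite big_cons /= coef_cat coef_scl IH.
Qed.

End FormalSums.

(** * Monomials of arity 4 *)

Notation mLL a b c d := (M (M (M (V a) (V b)) (V c)) (V d)).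
Notation mLR a b c d := (M (M (V a) (M (V b) (V c))) (V d)).
Notation mB a b c d := (M (M (V a) (V b)) (M (V c) (V d))).
Notation mRL a b c d := (M (V a) (M (M (V b) (V c)) (V d))).
Notation mRR a b c d := (M (V a) (M (V b) (M (V c) (V d)))).

Definition rcomb (s : seq nat) : tm := mRR (nth 0 s 0) (nth 0 s 1) (nth 0 s 2) (nth 0 s 3).
Definition bal (s : seq nat) : tm := mB (nth 0 s 0) (nth 0 s 1) (nth 0 s 2) (nth 0 s 3).

Lemma size_leaves_gt0 t : (0 < size (leaves t))%N.
Proof. by elim: t => //= a IHa b IHb; rewrite size_cat; lia. Qed.

Lemma leaves1 t : size (leaves t) = 1%N -> exists a, t = V a.
Proof.
case: t => [a|u v] /=; first by exists a.
by have := size_leaves_gt0 u; have := size_leaves_gt0 v; rewrite size_cat; lia.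
Qed.

Lemma leaves2 t : size (leaves t) = 2%N -> exists a b, t = M (V a) (V b).
Proof.
case: t => [//|u v]; rewrite /= size_cat => uv.
have := size_leaves_gt0 u; have := size_leaves_gt0 v => v0 u0.
have [a ->] : exists a, u = V a by apply: leaves1; lia.
have [b ->] : exists b, v = V b by apply: leaves1; lia.
by exists a, b.
Qed.

Lemma leaves3 t : size (leaves t) = 3%N ->
  exists a b c, t = M (M (V a) (V b)) (V c) \/ t = M (V a) (M (V b) (V c)).
Proof.
case: t => [//|u v]; rewrite /= size_cat => uv.
have := size_leaves_gt0 u; have := size_leaves_gt0 v => v0 u0.
have [u1|u2] : size (leaves u) = 1%N \/ size (leaves u) = 2%N by lia.
- have [a ->] := leaves1 u1; have [b [c ->]] : exists b c, v = M (V b) (V c).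
    by apply: leaves2; lia.
  by exists a, b, c; right.
- have [a [b ->]] := leaves2 u2; have [c ->] : exists c, v = V c by apply: leaves1; lia.
  by exists a, b, c; left.
Qed.

Variant arity4_spec : tm -> Prop :=
  | Arity4LL a b c d of perm_eq [:: a; b; c; d] (iota 0 4) : arity4_spec (mLL a b c d)
  | Arity4LR a b c d of perm_eq [:: a; b; c; d] (iota 0 4) : arity4_spec (mLR a b c d)
  | Arity4B a b c d of perm_eq [:: a; b; c; d] (iota 0 4) : arity4_spec (mB a b c d)
  | Arity4RL a b c d of perm_eq [:: a; b; c; d] (iota 0 4) : arity4_spec (mRL a b c d)
  | Arity4RR a b c d of perm_eq [:: a; b; c; d] (iota 0 4) : arity4_spec (mRR a b c d).

Lemma arity4P m : multilin 4 m -> arity4_spec m.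
Proof.
case: m => [a|u v] mm; have := perm_size mm; rewrite size_iota //= size_cat => uv.
have := size_leaves_gt0 u; have := size_leaves_gt0 v => v0 u0; move: mm.
have [u1|[u2|u3]] : (size (leaves u) = 1 \/ size (leaves u) = 2 \/ size (leaves u) = 3)%N.
  by lia.
- have [a ->] := leaves1 u1.
  have [b [c [d [->|->]]]] : exists b c d,
      v = M (M (V b) (V c)) (V d) \/ v = M (V b) (M (V c) (V d)) by apply: leaves3; lia.
  + exact: Arity4RL.
  + exact: Arity4RR.
- have [a [b ->]] := leaves2 u2; have [c [d ->]] : exists c d, v = M (V c) (V d).
    by apply: leaves2; lia.
  exact: Arity4B.
- have [a [b [c [->|->]]]] := leaves3 u3; have [d ->] : exists d, v = V d by apply: leaves1; lia.
  + exact: Arity4LL.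
  + exact: Arity4LR.
Qed.

Fixpoint ctx_size (c : ctx) : nat :=
  match c with
  | Hole => 0
  | CL c' t => ctx_size c' + size (leaves t)
  | CR t c' => size (leaves t) + ctx_size c'
  end.

Lemma size_leaves_plug c s : size (leaves (plug c s)) = (ctx_size c + size (leaves s))%N.
Proof. by elim: c => [|c IH t|t c IH] //=; rewrite size_cat IH; lia. Qed.

Lemma ctx_size0 c : ctx_size c = 0%N -> c = Hole.
Proof. by case: c => [|c t|t c] //=; have := size_leaves_gt0 t; lia. Qed.

Variant gen4_spec : ctx * tm * tm * tm -> Prop :=
  | Gen4LL a b c d : gen4_spec (Hole, M (V a) (V b), V c, V d)
  | Gen4LR a b c d : gen4_spec (Hole, V a, M (V b) (V c), V d)
  | Gen4B a b c d : gen4_spec (Hole, V a, V b, M (V c) (V d))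
  | Gen4CL a b c d : gen4_spec (CL Hole (V d), V a, V b, V c)
  | Gen4CR a b c d : gen4_spec (CR (V a) Hole, V b, V c, V d).

Lemma gen4P G : validJ 4 G -> gen4_spec G.
Proof.
case: G => [[[c u] v] w] /= /perm_size; rewrite size_iota size_leaves_plug /= !size_cat.
have := size_leaves_gt0 u; have := size_leaves_gt0 v; have := size_leaves_gt0 w.
move=> w0 v0 u0 sz; have leaf t : size (leaves t) = 1%N -> exists a, t = V a by exact: leaves1.
case: c sz => [|c t|t c] /= sz.
- have [u2|[v2|w2]] : (size (leaves u) = 2 \/ size (leaves v) = 2 \/ size (leaves w) = 2)%N.
    by lia.
  + have [a [b ->]] := leaves2 u2.
    have [[c ->] [d ->]] : (exists c, v = V c) /\ (exists d, w = V d) by split; apply: leaf; lia.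
    exact: Gen4LL.
  + have [b [c ->]] := leaves2 v2.
    have [[a ->] [d ->]] : (exists a, u = V a) /\ (exists d, w = V d) by split; apply: leaf; lia.
    exact: Gen4LR.
  + have [c [d ->]] := leaves2 w2.
    have [[a ->] [b ->]] : (exists a, u = V a) /\ (exists b, v = V b) by split; apply: leaf; lia.
    exact: Gen4B.
- have := size_leaves_gt0 t => t0; have -> : c = Hole by apply: ctx_size0; lia.
  have [[a ->] [b ->] [c' ->] [d ->]] : [/\ exists a, u = V a, exists b, v = V b,
    exists c, w = V c & exists d, t = V d] by split; apply: leaf; lia.
  exact: Gen4CL.
- have := size_leaves_gt0 t => t0; have -> : c = Hole by apply: ctx_size0; lia.
  have [[a ->] [b ->] [c' ->] [d ->]] : [/\ exists a, t = V a, exists b, u = V b,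
    exists c, v = V c & exists d, w = V d] by split; apply: leaf; lia.
  exact: Gen4CR.
Qed.

(** * Rewriting with (LR) when x has one nonzero coordinate *)

Section Reduction.
Variable F : fieldType.
Implicit Types (x : 'I_6 -> F) (m : tm) (c d t : F).

Definition xsingle (k : nat) t : 'I_6 -> F := fun i => if val i == k then t else 0.

Lemma xsingleE k t j : (j < 6)%N -> xsingle k t (inord j) = if j == k then t else 0.
Proof. by move=> j6; rewrite /xsingle /= inordK. Qed.

(* The monomial of the right-hand side of (LR) whose coefficient is x_(k+1):
   coordinates are counted from 0, so [xsingle 0 1] is the associative relation. *)
Definition lr_rhs (k : nat) (u v w : tm) : tm :=
  match k with
  | 0 => M u (M v w) | 1 => M u (M w v) | 2 => M v (M u w)
  | 3 => M v (M w u) | 4 => M w (M u v) | _ => M w (M v u)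
  end.

Definition redJ x n m c m' : Prop := inJ x n [:: (1, m); (- c, m')].

Ltac coef_ring := move=> m0; rewrite ?(coef_cat, coef_scl, coef_cons, coef_nil) /= !ifE.

Lemma redJ_refl x n m : redJ x n m 1 m.
Proof. by apply: inJ_ext (inJ_nil x n); coef_ring; ring. Qed.

Lemma redJ_coef x n m c c' m' : redJ x n m c m' -> c = c' -> redJ x n m c' m'.
Proof. by move=> J <-. Qed.

Lemma redJ_trans x n m1 m2 m3 c d :
  redJ x n m1 c m2 -> redJ x n m2 d m3 -> redJ x n m1 (c * d) m3.
Proof. by move=> J1 J2; apply: inJ_ext (inJ_cat J1 (inJ_scl c J2)); coef_ring; ring. Qed.

Lemma redJ_cycle x n m m' c : redJ x n m c m -> c != 1 -> redJ x n m 0 m'.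
Proof.
move=> Jm c1; apply: inJ_ext (inJ_scl (1 - c)^-1 Jm).
have c1' : 1 - c != 0 by rewrite subr_eq0 eq_sym.
by coef_ring; field.
Qed.

Lemma redJ_overlap x n m m1 m2 c1 c2 :
  redJ x n m c1 m1 -> redJ x n m c2 m2 -> c1 != 0 -> redJ x n m1 (c2 / c1) m2.
Proof.
move=> J1 J2 c10; apply: inJ_ext (inJ_cat (inJ_scl (- c1^-1) J1) (inJ_scl c1^-1 J2)).
by coef_ring; field.
Qed.

Lemma redJ_step k t n (C : ctx) u v w : (k < 6)%N ->
  multilin n (plug C (M (M u v) w)) ->
  redJ (xsingle k t) n (plug C (M (M u v) w)) t (plug C (lr_rhs k u v w)).
Proof.
move=> k6 mC; apply/inJE; exists [:: (1, (C, u, v, w))]; split; first by rewrite /= mC.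
move=> m0; rewrite big_cons big_nil /genJ /relLR /= !coef_cons coef_nil /= !xsingleE //.
by case: k k6 => [|[|[|[|[|[|]]]]]] //= _; rewrite !ifE; ring.
Qed.

End Reduction.

(** * Normal forms *)

Ltac perm4 H := rewrite -(permPr H) /= ?nth_nil; apply/seq.permP => P /=; lia.

Section NormalForms.
Variable F : fieldType.
Implicit Types (x : 'I_6 -> F) (t : F) (m : tm).

(* Entry k of the row of the bracketing of [m]: the coefficient and the labels of the
   right comb to which [m] rewrites when x = t e_(k+1).  Balanced monomials get
   coefficient 0 for k = 4, 5; for k = 4 this is a genuine reduction when t^2 <> 1. *)
Definition rnf (k : nat) t m : F * seq nat :=
  match m with
  | mLL a b c d => nth (0, leaves m)
      [:: (t ^+ 2, [:: a; b; c; d]); (t ^+ 3, [:: a; d; b; c]); (t ^+ 2, [:: c; b; a; d]);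
          (t, [:: c; d; a; b]); (t ^+ 2, [:: d; c; a; b]); (t, [:: d; c; a; b])] k
  | mLR a b c d => nth (0, leaves m)
      [:: (t ^+ 2, [:: a; b; c; d]); (t, [:: a; d; b; c]); (t ^+ 2, [:: c; b; a; d]);
          (t ^+ 3, [:: c; a; b; d]); (t, [:: d; a; b; c]); (t ^+ 2, [:: d; a; c; b])] k
  | mB a b c d => nth (0, leaves m)
      [:: (t, [:: a; b; c; d]); (t ^+ 2, [:: a; c; b; d]); (t, [:: b; a; c; d]);
          (t ^+ 2, [:: b; d; a; c])] k
  | mRL a b c d => nth (0, leaves m)
      [:: (t, [:: a; b; c; d]); (t, [:: a; b; d; c]); (t, [:: a; c; b; d]);
          (t, [:: a; c; d; b]); (t, [:: a; d; b; c]); (t, [:: a; d; c; b])] k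
  | mRR a b c d => (1, [:: a; b; c; d])
  | _ => (0, leaves m)
  end.

Lemma rnf_perm k t m : multilin 4 m -> perm_eq (rnf k t m).2 (iota 0 4).
Proof. by case/arity4P=> a b c d H; case: k => [|[|[|[|[|[|k]]]]]]; perm4 H. Qed.

Lemma rnf_act4 k t s m :
  multilin 4 m -> rnf k t (act4 s m) = ((rnf k t m).1, map (relab s) (rnf k t m).2).
Proof. by case/arity4P=> a b c d _; case: k => [|[|[|[|[|[|k]]]]]] //=; rewrite ?nth_nil. Qed.

Ltac side H := solve [ring | rewrite /multilin; perm4 H].

Section Chains.
Variables (t : F) (a b c d : nat).
Hypothesis abcd : perm_eq [:: a; b; c; d] (iota 0 4).

Lemma redJ_RL k : (k < 6)%N -> redJ (xsingle k t) 4 (mRL a b c d)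
  (rnf k t (mRL a b c d)).1 (rcomb (rnf k t (mRL a b c d)).2).
Proof.
move=> k6; have step := @redJ_step F k t 4; rewrite /rcomb.
case: k k6 step => [|[|[|[|[|[|]]]]]] //= _ step;
  by apply: redJ_coef (step (CR (V a) Hole) (V b) (V c) (V d) isT _) _; side abcd.
Qed.

Lemma redJ_B k : (k < 4)%N || (k == 4%N) && (t ^+ 2 != 1) -> redJ (xsingle k t) 4 (mB a b c d)
  (rnf k t (mB a b c d)).1 (rcomb (rnf k t (mB a b c d)).2).
Proof.
move=> hk; have step := @redJ_step F k t 4; rewrite /rcomb.
case: k hk step => [|[|[|[|[|]]]]] //= hk step.
- by apply: redJ_coef (step Hole (V a) (V b) (M (V c) (V d)) isT _) _; side abcd.
- apply: redJ_coef (redJ_trans (step Hole (V a) (V b) (M (V c) (V d)) isT _)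
    (step (CR (V a) Hole) (V c) (V d) (V b) isT _)) _; side abcd.
- by apply: redJ_coef (step Hole (V a) (V b) (M (V c) (V d)) isT _) _; side abcd.
- apply: redJ_coef (redJ_trans (step Hole (V a) (V b) (M (V c) (V d)) isT _)
    (step (CR (V b) Hole) (V c) (V d) (V a) isT _)) _; side abcd.
- apply: redJ_cycle (redJ_trans (step Hole (V a) (V b) (M (V c) (V d)) isT _)
    (step Hole (V c) (V d) (M (V a) (V b)) isT _)) _; rewrite -?expr2 //; side abcd.
Qed.

Lemma redJ_LR k : (k < 6)%N -> redJ (xsingle k t) 4 (mLR a b c d)
  (rnf k t (mLR a b c d)).1 (rcomb (rnf k t (mLR a b c d)).2).
Proof.
move=> k6; have step := @redJ_step F k t 4; rewrite /rcomb.
have top := step Hole (V a) (M (V b) (V c)) (V d) k6.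
case: k k6 step top => [|[|[|[|[|[|]]]]]] //= _ step top.
- apply: redJ_coef (redJ_trans (top _) (step (CR (V a) Hole) (V b) (V c) (V d) isT _)) _;
    side abcd.
- by apply: redJ_coef (top _) _; side abcd.
- apply: redJ_coef (redJ_trans (top _) (step Hole (V b) (V c) (M (V a) (V d)) isT _)) _;
    side abcd.
- apply: redJ_coef (redJ_trans (top _) (redJ_trans (step Hole (V b) (V c) (M (V d) (V a)) isT _)
    (step (CR (V c) Hole) (V d) (V a) (V b) isT _))) _; side abcd.
- by apply: redJ_coef (top _) _; side abcd.
- apply: redJ_coef (redJ_trans (top _) (step (CR (V d) Hole) (V b) (V c) (V a) isT _)) _;
    side abcd.
Qed.

Lemma redJ_LL k : (k < 6)%N -> redJ (xsingle k t) 4 (mLL a b c d)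
  (rnf k t (mLL a b c d)).1 (rcomb (rnf k t (mLL a b c d)).2).
Proof.
move=> k6; have step := @redJ_step F k t 4; rewrite /rcomb.
have top := step Hole (M (V a) (V b)) (V c) (V d) k6.
case: k k6 step top => [|[|[|[|[|[|]]]]]] //= _ step top.
- apply: redJ_coef (redJ_trans (top _) (step Hole (V a) (V b) (M (V c) (V d)) isT _)) _;
    side abcd.
- apply: redJ_coef (redJ_trans (top _) (redJ_trans (step Hole (V a) (V b) (M (V d) (V c)) isT _)
    (step (CR (V a) Hole) (V d) (V c) (V b) isT _))) _; side abcd.
- apply: redJ_coef (redJ_trans (top _) (step (CR (V c) Hole) (V a) (V b) (V d) isT _)) _;
    side abcd.
- by apply: redJ_coef (top _) _; side abcd.
- apply: redJ_coef (redJ_trans (top _) (step (CR (V d) Hole) (V a) (V b) (V c) isT _)) _;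
    side abcd.
- by apply: redJ_coef (top _) _; side abcd.
Qed.

End Chains.

Definition reduces_to x (B : seq nat -> tm) (nf : tm -> F * seq nat) :=
  forall m, multilin 4 m -> perm_eq (nf m).2 (iota 0 4) /\ redJ x 4 m (nf m).1 (B (nf m).2).

Lemma rnf_reduces k t : (k < 4)%N || (k == 4%N) && (t ^+ 2 != 1) ->
  reduces_to (xsingle k t) rcomb (rnf k t).
Proof.
move=> hk m mm; split; first exact: rnf_perm.
have k6 : (k < 6)%N by case/orP: hk => [/ltn_trans->|/andP[/eqP->]].
by case/arity4P: mm => a b c d abcd;
  [exact: redJ_LL | exact: redJ_LR | exact: redJ_B | exact: redJ_RL | exact: redJ_refl].
Qed.

End NormalForms.

(** * Regularity criteria *)

(* The labels of the right comb that stands for the basis vector [tau] of F S_4. *)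
Definition tseq (tau : {perm 'I_4}) : seq nat := [seq val (tau i) | i <- enum 'I_4].

Lemma tseq_inj : injective tseq.
Proof.
move=> t1 t2 /eq_in_map E; apply/permP => i; apply/val_inj; apply: E.
by rewrite mem_enum.
Qed.

Lemma size_tseq tau : size (tseq tau) = 4%N.
Proof. by rewrite size_map size_enum_ord. Qed.

Lemma tseq_perm tau : perm_eq (tseq tau) (iota 0 4).
Proof.
apply: uniq_perm; rewrite ?iota_uniq //.
  by rewrite map_inj_uniq ?enum_uniq // => i j /val_inj/perm_inj.
move=> k; rewrite mem_iota add0n; apply/mapP/idP => [[i _ ->]|k4]; first exact: ltn_ord.
by exists (tau^-1 (Ordinal k4))%g; rewrite ?mem_enum ?permKV.
Qed.

Lemma tseq_surj sq : perm_eq sq (iota 0 4) -> exists tau, tseq tau = sq.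
Proof.
move=> sqP; have sz : size sq = 4%N by rewrite (perm_size sqP) size_iota.
have lt4 i : (i < 4)%N -> (nth 0 sq i < 4)%N.
  move=> i4; have : nth 0 sq i \in iota 0 4 by rewrite -(perm_mem sqP) mem_nth ?sz.
  by rewrite mem_iota.
pose f (i : 'I_4) : 'I_4 := inord (nth 0 sq i).
have f_inj : injective f.
  move=> i j /(congr1 val); rewrite /f /= !inordK ?lt4 // => /eqP.
  by rewrite nth_uniq ?sz ?(perm_uniq sqP) ?iota_uniq // => /eqP /val_inj.
exists (perm f_inj); rewrite /tseq (eq_map (g := nth 0 sq \o val)); last first.
  by move=> i; rewrite permE /f /= inordK ?lt4.
by rewrite map_comp val_enum_ord -sz -/(mkseq _ _) mkseq_nth.
Qed.

Lemma relabK s i : (i < 4)%N -> relab s^-1 (relab s i) = i.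
Proof. by move=> i4; rewrite /relab i4 /= ltn_ord inord_val permK inordK. Qed.

Lemma tseqM tau s : tseq (tau * s^-1) = map (relab s^-1) (tseq tau).
Proof.
by rewrite /tseq -map_comp; apply: eq_map => i /=; rewrite /relab ltn_ord inord_val permM.
Qed.

Lemma tseq_relab tau s sq : perm_eq sq (iota 0 4) ->
  (tseq tau == map (relab s) sq) = (tseq (tau * s^-1) == sq).
Proof.
move=> sqP; have lt4 l : perm_eq l (iota 0 4) -> {in l, forall i, i < 4}%N.
  by move=> lP i; rewrite (perm_mem lP) mem_iota.
rewrite tseqM; apply/eqP/eqP => [->|<-].
  by rewrite -map_comp map_id_in // => i /(lt4 _ sqP) i4 /=; rewrite relabK.
rewrite -map_comp map_id_in // => i /(lt4 _ (tseq_perm tau)) i4 /=.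
by rewrite -{1}[s]invgK relabK.
Qed.

Lemma seq4E (s : seq nat) : size s = 4%N -> s = [:: nth 0 s 0; nth 0 s 1; nth 0 s 2; nth 0 s 3].
Proof. by case: s => [|a [|b [|c [|d [|]]]]]. Qed.

Lemma leaves_rcomb s : size s = 4%N -> leaves (rcomb s) = s.
Proof. by move/seq4E => {2}->. Qed.

Lemma leaves_bal s : size s = 4%N -> leaves (bal s) = s.
Proof. by move/seq4E => {2}->. Qed.

Lemma rcomb_inj s s' : size s = 4%N -> size s' = 4%N -> rcomb s = rcomb s' -> s = s'.
Proof. by move=> s4 s'4 E; rewrite -(leaves_rcomb s4) E leaves_rcomb. Qed.

Lemma rcomb_multilin s : perm_eq s (iota 0 4) -> multilin 4 (rcomb s).
Proof. by move=> sP; rewrite /multilin leaves_rcomb // (perm_size sP) size_iota. Qed.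

Lemma bal_multilin s : perm_eq s (iota 0 4) -> multilin 4 (bal s).
Proof. by move=> sP; rewrite /multilin leaves_bal // (perm_size sP) size_iota. Qed.

Section LinearAlgebra.
Variable F : fieldType.

Lemma sum_delta (P : finType) (a : P) (G : P -> F) : \sum_t (t == a)%:R * G t = G a.
Proof. by rewrite (bigD1 a) //= eqxx mul1r big1 ?addr0 // => t /negbTE->; rewrite mul0r. Qed.

Lemma sum_enum_val (I : finType) (G : I -> F) : \sum_i G i = \sum_(k < #|I|) G (enum_val k).
Proof. by rewrite -big_enum_val. Qed.

Lemma ffun_dependent (I P : finType) (v : I -> {ffun P -> F}) : (#|P| < #|I|)%N ->
  exists c : I -> F, (exists i, c i != 0) /\ forall s, \sum_i c i * v i s = 0.
Proof.
move=> PI; pose A : 'M[F]_(#|I|, #|P|) := \matrix_(i, j) v (enum_val i) (enum_val j).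
have [i0 [j0 nz]] : exists i j, kermx A i j != 0.
  have : kermx A != 0 by rewrite -mxrank_eq0 mxrank_ker; have := rank_leq_col A; lia.
  case: (pickP (fun ij : 'I__ * 'I__ => kermx A ij.1 ij.2 != 0)) => [[i j] nz _|no].
    by exists i, j.
  by move=> /eqP[]; apply/matrixP => i j; rewrite [RHS]mxE; apply/eqP/negbFE/(no (i, j)).
exists (fun i => kermx A i0 (enum_rank i)); split; first by exists (enum_val j0); rewrite enum_valK.
move=> s; transitivity ((kermx A *m A) i0 (enum_rank s)); last by rewrite mulmx_ker mxE.
rewrite mxE [LHS]sum_enum_val; apply: eq_bigr => k _; by rewrite enum_valK [A _ _]mxE enum_rankK.
Qed.

Lemma ffun_spanning_free (P : finType) (v : P -> {ffun P -> F}) :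
  (forall f : {ffun P -> F}, exists k : P -> F, forall s, f s = \sum_t k t * v t s) ->
  forall c : P -> F, (forall s, \sum_t c t * v t s = 0) -> forall t, c t = 0.
Proof.
move=> span c dep t.
have [K HK] : exists K : P -> (P -> F), forall s s', ((s' == s)%:R : F) = \sum_t K s t * v t s'.
  suff /fin_all_exists[K HK] : forall s, exists k : P -> F,
      forall s', ((s' == s)%:R : F) = \sum_t k t * v t s' by exists K.
  move=> s; have [k Hk] := span [ffun s' => (s' == s)%:R].
  by exists k => s'; rewrite -Hk ffunE.
pose A : 'M[F]_#|P| := \matrix_(i, j) v (enum_val i) (enum_val j).
pose B : 'M[F]_#|P| := \matrix_(i, j) K (enum_val i) (enum_val j).
have AB : A *m B = 1%:M.
  apply: mulmx1C; apply/matrixP => i j; rewrite !mxE -(inj_eq enum_val_inj) eq_sym HK.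
  by rewrite [RHS]sum_enum_val; apply: eq_bigr => k _; rewrite !mxE.
pose cr : 'rV[F]_#|P| := \row_k c (enum_val k).
have cr0 : cr *m A = 0.
  apply/matrixP => i j; rewrite [RHS]mxE -(dep (enum_val j)) mxE [RHS]sum_enum_val.
  by apply: eq_bigr => k _; rewrite !mxE.
have : cr = 0 by rewrite -[cr]mulmx1 -AB mulmxA cr0 mul0mx.
by move/matrixP/(_ 0 (enum_rank t)); rewrite !mxE enum_rankK.
Qed.

End LinearAlgebra.

Section Criteria.
Variables (F : fieldType) (x : 'I_6 -> F).
Implicit Types (nf : tm -> F * seq nat) (l : fsum F) (m : tm).

Definition nfcoord nf (tau : {perm 'I_4}) m : F := (nf m).1 * (tseq tau == (nf m).2)%:R.

Lemma nfcoord_rcomb nf tau tau' : (forall a b c d, nf (mRR a b c d) = (1, [:: a; b; c; d])) ->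
  nfcoord nf tau (rcomb (tseq tau')) = (tau == tau')%:R.
Proof.
by move=> nf_RR; rewrite /nfcoord /rcomb nf_RR -(seq4E (size_tseq _)) mul1r (inj_eq tseq_inj).
Qed.

Lemma inJ_of_nfcoord nf : reduces_to x rcomb nf ->
  forall l, inT 4 l -> (forall tau, lin (nfcoord nf tau) l = 0) -> inJ x 4 l.
Proof.
move=> red l Tl l0; have mlin p : p \in l -> multilin 4 p.2 by move/(allP Tl).
pose r := flatten [seq scl p.1 [:: (1, p.2); (- (nf p.2).1, rcomb (nf p.2).2)] | p <- l].
have Jr : inJ x 4 r.
  apply: inJ_flatten => _ /mapP[p pl ->]; apply: inJ_scl.
  by have [_] := red _ (mlin p pl).
pose rest m := \sum_(p <- l) (if rcomb (nf p.2).2 == m then p.1 * (nf p.2).1 else 0).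
have coef_l m : coef l m = coef r m + rest m.
  rewrite /r /rest; elim: (l) => [|p l' IH]; first by rewrite !coef_nil big_nil addr0.
  by rewrite !coef_cons IH big_cons /= !ifE; ring.
apply: inJ_ext Jr => m; rewrite coef_l -[LHS]addr0; congr (_ + _); apply/esym.
have [/hasP[p0 p0l /eqP<-]|/hasPn none] := boolP (has (fun p => rcomb (nf p.2).2 == m) l);
  last by rewrite /rest big_seq big1 // => p /none /negbTE ->.
have [sq0P _] := red _ (mlin p0 p0l); have [tau0 E0] := tseq_surj sq0P.
rewrite -(l0 tau0) /rest /lin big_seq [RHS]big_seq; apply: eq_bigr => p pl.
have [sqP _] := red _ (mlin p pl); rewrite /nfcoord -E0 ifE mulrA.
congr (_ * (_ : bool)%:R); apply/eqP/eqP => [/rcomb_inj E|->] //.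
by rewrite E // ?size_tseq // (perm_size sqP) size_iota.
Qed.

Lemma regular4_of_normal_form nf :
  reduces_to x rcomb nf ->
  (forall s m, multilin 4 m -> nf (act4 s m) = ((nf m).1, map (relab s) (nf m).2)) ->
  (forall a b c d, nf (mRR a b c d) = (1, [:: a; b; c; d])) ->
  (forall tau, killsJ x (nfcoord nf tau)) ->
  regular4 x.
Proof.
move=> red nf_act nf_RR kill; exists (fun m => [ffun tau => nfcoord nf tau m]); split.
- move=> s m mm; apply/ffunP => tau; rewrite /regact !ffunE /nfcoord nf_act //=.
  by rewrite tseq_relab //; case: (red m mm).
- move=> f; exists [seq (f tau, rcomb (tseq tau)) | tau <- enum {perm 'I_4}]; split.
    by apply/allP => _ /mapP[tau _ ->]; rewrite /= /multilin leaves_rcomb ?size_tseq ?tseq_perm.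
  apply/ffunP => tau; rewrite ffunE big_map big_enum (bigD1 tau) //= big1 ?addr0.
    by rewrite ffunE nfcoord_rcomb // eqxx mulr1.
  by move=> tau' ne; rewrite ffunE nfcoord_rcomb // eq_sym (negbTE ne) mulr0.
- move=> l Tl; split=> [/ffunP l0 | Jl].
    apply: (inJ_of_nfcoord red Tl) => tau; have := l0 tau; rewrite !ffunE => <-.
    by apply: eq_bigr => p _; rewrite ffunE.
  apply/ffunP => tau; rewrite !ffunE; transitivity (lin (nfcoord nf tau) l).
    by apply: eq_bigr => p _; rewrite ffunE.
  exact: lin_inJ (kill tau) Jl.
Qed.

End Criteria.

Section RegularConsequences.
Variables (F : fieldType) (x : 'I_6 -> F) (phi : tm -> FS4 F).
Hypothesis phi_onto : forall f : FS4 F, exists l, inT 4 l /\ linext phi l = f.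
Hypothesis phi_ker : forall l, inT 4 l -> (linext phi l = [ffun => 0] <-> inJ x 4 l).

Lemma linext_phi l tau : linext phi l tau = lin (phi^~ tau) l.
Proof. by rewrite ffunE. Qed.

Lemma phi_redJ m c m' : multilin 4 m -> multilin 4 m' -> redJ x 4 m c m' ->
  forall tau, phi m tau = c * phi m' tau.
Proof.
move=> mm mm' /phi_ker; rewrite /= mm mm' => /(_ isT)/ffunP J tau; apply/eqP.
move: (J tau); rewrite linext_phi ffunE /lin !big_cons big_nil /= addr0 mul1r mulNr.
by rewrite -subr_eq0 => ->.
Qed.

Lemma phi_normal_forms_free (B : seq nat -> tm) nf :
  (forall sq, perm_eq sq (iota 0 4) -> multilin 4 (B sq)) -> reduces_to x B nf ->
  forall sq1 sq2 e, perm_eq sq1 (iota 0 4) -> perm_eq sq2 (iota 0 4) ->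
  redJ x 4 (B sq1) e (B sq2) -> sq1 = sq2.
Proof.
move=> Bmlin red sq1 sq2 e sq1P sq2P J12.
pose v tau := phi (B (tseq tau)).
have phi_v m : multilin 4 m -> exists c tau, forall s, phi m s = c * v tau s.
  move=> mm; have [sqP Jm] := red m mm; have [tau E] := tseq_surj sqP.
  by exists (nf m).1, tau; rewrite /v E; apply: phi_redJ Jm; rewrite ?Bmlin.
have span (f : FS4 F) : exists k : {perm 'I_4} -> F, forall s, f s = \sum_tau k tau * v tau s.
  have [l [Tl <-]] := phi_onto f; elim: l Tl => [_|p l IH /andP[pm Tl]].
    by exists (fun=> 0) => s; rewrite linext_phi /lin big_nil big1 // => tau _; rewrite mul0r.
  have [k Ek] := IH Tl; have [c [tp Ep]] := phi_v _ pm.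
  exists (fun tau => k tau + (tau == tp)%:R * (p.1 * c)) => s.
  rewrite linext_phi /lin big_cons -/(lin (phi^~ s) l) -linext_phi Ek Ep.
  under [RHS]eq_bigr do rewrite mulrDl -mulrA.
  by rewrite big_split /= sum_delta mulrA addrC.
have [t1 E1] := tseq_surj sq1P; have [t2 E2] := tseq_surj sq2P.
apply/eqP; apply: contraT => ne12.
have t12 : t1 != t2 by apply: contra_neq ne12 => e12; rewrite -E1 -E2 e12.
pose c tau := (tau == t1)%:R - e * (tau == t2)%:R.
have dep s : \sum_tau c tau * v tau s = 0.
  under eq_bigr do rewrite mulrBl -mulrA.
  rewrite sumrB -mulr_sumr !sum_delta /v E1 E2.
  by rewrite (phi_redJ _ _ J12) ?Bmlin // subrr.
have := ffun_spanning_free span dep t1.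
by rewrite /c eqxx (negbTE t12) mulr0 subr0 => /eqP; rewrite oner_eq0.
Qed.

Lemma phi_biorthogonal_card (I : finType) (L : I -> fsum F) (lam : I -> tm -> F) :
  (forall i, inT 4 (L i)) -> (forall j, killsJ x (lam j)) ->
  (forall i j, lin (lam j) (L i) = (i == j)%:R) -> (#|I| <= #|{perm 'I_4}|)%N.
Proof.
move=> TL kill dual; rewrite leqNgt; apply/negP => /(ffun_dependent (fun i => linext phi (L i))).
case=> c [[i0 ci0] dep].
pose l := flatten [seq scl (c i) (L i) | i <- enum I].
have lin_l g : lin g l = \sum_i c i * lin g (L i).
  by rewrite lin_flatten big_map big_enum; apply: eq_bigr => i _; rewrite lin_scl.
have Tl : inT 4 l.
  apply/allP => p /flattenP[_ /mapP[i _ ->] /mapP[q qL ->]].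
  by move/allP: (TL i) => /(_ q qL).
have /(phi_ker Tl)/(lin_inJ (kill i0)) : linext phi l = [ffun => 0].
  apply/ffunP => s; rewrite linext_phi lin_l ffunE; rewrite -[RHS](dep s).
  by apply: eq_bigr => i _; rewrite linext_phi.
rewrite lin_l (eq_bigr (fun i => (i == i0)%:R * c i)) => [|i _]; last by rewrite dual mulrC.
by rewrite sum_delta => /eqP; rewrite (negbTE ci0).
Qed.

End RegularConsequences.

Section RegularArity4.
Variables (F : fieldType) (x : 'I_6 -> F).
Hypothesis reg : regular4 x.

Lemma regular4_normal_forms_free (B : seq nat -> tm) nf :
  (forall sq, perm_eq sq (iota 0 4) -> multilin 4 (B sq)) -> reduces_to x B nf ->
  forall sq1 sq2 e, perm_eq sq1 (iota 0 4) -> perm_eq sq2 (iota 0 4) ->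
  redJ x 4 (B sq1) e (B sq2) -> sq1 = sq2.
Proof.
by case: reg => phi [_ onto ker]; exact: phi_normal_forms_free.
Qed.

Lemma regular4_biorthogonal_card (I : finType) (L : I -> fsum F) (lam : I -> tm -> F) :
  (forall i, inT 4 (L i)) -> (forall j, killsJ x (lam j)) ->
  (forall i j, lin (lam j) (L i) = (i == j)%:R) -> (#|I| <= #|{perm 'I_4}|)%N.
Proof.
by move=> TL kill dual; case: reg => phi [_ _ ker]; apply: (phi_biorthogonal_card ker TL kill dual).
Qed.

End RegularArity4.

(** * The classification *)

Section Functionals.
Variable F : fieldType.
Implicit Types (t : F) (m : tm).
(* A linear form on the orbit of (a1 a2)(a3 a4) under the relation for x = t e_5
   (k = 4) or x = t e_6 (k = 5), weighted so that it kills J_x(4) when t = +-1. *)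
Definition bal_coord (k : nat) t m : F :=
  if m is mB a b c d then
    let hit s := (s == [:: 0; 1; 2; 3])%:R in
    if k == 4%N then hit [:: a; b; c; d] + t * hit [:: c; d; a; b]
    else hit [:: a; b; c; d] + t * hit [:: c; d; b; a] + t ^+ 2 * hit [:: b; a; d; c]
         + t ^+ 3 * hit [:: d; c; a; b]
  else 0.

Ltac gen_lin := move=> G /gen4P[] a b c d;
  rewrite /lin /genJ /relLR /= !big_cons big_nil /= !xsingleE //= ?nth_nil.

Lemma rnf_kills k t tau :
  [\/ k = 4%N, k = 0%N /\ t = 1 | k = 5%N /\ (t = 1 \/ t = -1)] ->
  killsJ (xsingle k t) (nfcoord (rnf k t) tau).
Proof.
by case=> [->|[-> ->]|[-> [->|->]]]; gen_lin; rewrite /nfcoord /=; ring.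
Qed.

Lemma bal_kills k t : (k = 4%N \/ k = 5%N) -> (t = 1 \/ t = -1) ->
  killsJ (xsingle k t) (bal_coord k t).
Proof. by case=> -> [->|->]; gen_lin; ring. Qed.

End Functionals.

Section Cases.
Variable F : fieldType.
Implicit Types (t : F) (m : tm).

Lemma redJ_critical_pair k t a b c d : (k < 6)%N -> t != 0 ->
  perm_eq [:: a; b; c; d] (iota 0 4) ->
  let m := mLL a b c d in let m' := plug (CL Hole (V d)) (lr_rhs k (V a) (V b) (V c)) in
  redJ (xsingle k t) 4 (rcomb (rnf k t m).2) (t * (rnf k t m').1 / (rnf k t m).1)
    (rcomb (rnf k t m').2).
Proof.
move=> k6 t0 abcd m m'; rewrite {}/m {}/m'; apply: redJ_overlap (redJ_LL t abcd k6) _ _.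
  apply: redJ_trans (@redJ_step F k t 4 (CL Hole (V d)) (V a) (V b) (V c) k6 _) _.
    by rewrite /multilin; perm4 abcd.
  by case: k k6 => [|[|[|[|[|[|]]]]]] // k6; apply: redJ_LR => //; perm4 abcd.
by case: k k6 => [|[|[|[|[|[|]]]]]] //= _; rewrite expf_neq0.
Qed.

Lemma not_regular4_critical_pair k t : (k < 4)%N -> t != 0 -> (k == 0%N) ==> (t != 1) ->
  ~ regular4 (xsingle k t).
Proof.
move=> k4 t0 t1 reg; have k6 : (k < 6)%N by lia.
have red : reduces_to (xsingle k t) rcomb (rnf k t) by apply: rnf_reduces; rewrite k4.
have free := regular4_normal_forms_free reg (@rcomb_multilin) red.
have := @redJ_critical_pair k t 0 1 2 3 k6 t0 isT.
case: k k4 k6 t1 reg red free => [|[|[|[|]]]] //= _ _ t1 _ _ free J.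
- have /free : redJ (xsingle 0 t) 4 (rcomb [:: 0; 1; 2; 3]) 0 (rcomb [:: 0; 1; 3; 2]).
    by apply: redJ_cycle J _; rewrite mulfK ?expf_neq0.
  by move/(_ isT isT).
all: by move/free: J => /(_ isT isT).
Qed.

Lemma rcomb_redJ0 t a b c d m : t != 0 -> t ^+ 2 != 1 ->
  perm_eq [:: a; b; c; d] (iota 0 4) -> redJ (xsingle 5 t) 4 (mRR a b c d) 0 m.
Proof.
move=> t0 t1 abcd; have cdba : perm_eq [:: c; d; b; a] (iota 0 4) by perm4 abcd.
have /= J := @redJ_critical_pair 5 t c d b a isT t0 cdba.
by apply: redJ_cycle J _; rewrite mulrAC mulfV // mul1r.
Qed.

Definition bnf m : F * seq nat := (if m is mB _ _ _ _ then 1 else 0, leaves m).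

Lemma bnf_reduces t : t != 0 -> t ^+ 2 != 1 -> reduces_to (xsingle 5 t) bal (bnf).
Proof.
move=> t0 t1 m mm; split=> //; case/arity4P: mm => a b c d abcd /=.
- apply: redJ_coef (redJ_trans (redJ_LL t abcd (isT : 5 < 6)%N) (rcomb_redJ0 _ t0 t1 _)) (mulr0 _).
  by perm4 abcd.
- apply: redJ_coef (redJ_trans (redJ_LR t abcd (isT : 5 < 6)%N) (rcomb_redJ0 _ t0 t1 _)) (mulr0 _).
  by perm4 abcd.
- exact: redJ_refl.
- apply: redJ_coef (redJ_trans (redJ_RL t abcd (isT : 5 < 6)%N) (rcomb_redJ0 _ t0 t1 _)) (mulr0 _).
  by perm4 abcd.
- exact: rcomb_redJ0.
Qed.

Lemma not_regular4_bnf t : t != 0 -> t ^+ 2 != 1 -> ~ regular4 (xsingle 5 t).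
Proof.
move=> t0 t1 reg; have J := @redJ_step F 5 t 4 Hole (V 0) (V 1) (M (V 2) (V 3)) isT isT.
by have := regular4_normal_forms_free reg (@bal_multilin) (bnf_reduces t0 t1)
  (sq1 := [:: 0; 1; 2; 3]) (sq2 := [:: 2; 3; 1; 0]) isT isT J.
Qed.

Lemma not_regular4_bal_coord k t : k = 4%N \/ k = 5%N -> t = 1 \/ t = -1 ->
  ~ regular4 (xsingle k t).
Proof.
move=> hk ht reg.
pose L (i : option {perm 'I_4}) : fsum F :=
  if i is Some tau then [:: (1, rcomb (tseq tau))] else [:: (1, bal [:: 0; 1; 2; 3])].
pose lam (j : option {perm 'I_4}) :=
  if j is Some tau then nfcoord (rnf k t) tau else bal_coord k t.
suff : (#|{: option {perm 'I_4}}| <= #|{perm 'I_4}|)%N by rewrite card_option ltnn.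
apply: (@regular4_biorthogonal_card F _ reg _ L lam).
- by case=> [tau|]; rewrite /= ?rcomb_multilin ?tseq_perm.
- case=> [tau|]; last exact: bal_kills.
  by apply: rnf_kills; case: hk => ->; [apply: Or31 | apply: Or33].
- have rnf_bal : (rnf k t (bal [:: 0; 1; 2; 3])).1 = 0 by case: hk => ->.
  case=> [tau|] [tau'|]; rewrite /lin big_cons big_nil /= mul1r addr0.
  + by rewrite nfcoord_rcomb // eq_sym.
  + by rewrite /rcomb.
  + by rewrite /nfcoord rnf_bal mul0r.
  + by rewrite !mulr0 !addr0; case: ifP.
Qed.

Lemma regular4_rnf k t : (k = 0%N /\ t = 1) \/ (k = 4%N /\ t ^+ 2 != 1) ->
  regular4 (xsingle k t).
Proof.
move=> hkt; apply: (regular4_of_normal_form (nf := rnf k t)) => //.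
- by apply: rnf_reduces; case: hkt => [[-> _]|[-> ->]].
- exact: rnf_act4.
- by move=> tau; apply: rnf_kills; case: hkt => [[-> ->]|[-> _]]; [apply: Or32 | apply: Or31].
Qed.

Lemma regular4_xsingle k t : (k < 6)%N -> t != 0 ->
  regular4 (xsingle k t) <-> (k = 0%N /\ t = 1) \/ (k = 4%N /\ t ^+ 2 != 1).
Proof.
move=> k6 t0; split=> [|]; last exact: regular4_rnf.
have unit_sq : t ^+ 2 = 1 -> t = 1 \/ t = -1.
  by move/eqP; rewrite sqrf_eq1 => /orP[] /eqP; [left | right].
case: k k6 => [|[|[|[|[|[|]]]]]] // _ reg.
- have [-> |t1] := eqVneq t 1; first by left.
  by case: (not_regular4_critical_pair (k := 0) isT t0 t1 reg).
- by case: (not_regular4_critical_pair (k := 1) isT t0 isT reg).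
- by case: (not_regular4_critical_pair (k := 2) isT t0 isT reg).
- by case: (not_regular4_critical_pair (k := 3) isT t0 isT reg).
- have [/eqP/unit_sq ht|t1] := boolP (t ^+ 2 == 1); last by right.
  by case: (not_regular4_bal_coord (or_introl erefl) ht reg).
- have [/eqP/unit_sq ht|t1] := boolP (t ^+ 2 == 1).
    by case: (not_regular4_bal_coord (or_intror erefl) ht reg).
  by case: (not_regular4_bnf t0 t1 reg).
Qed.

End Cases.

Section Support.
Variable F : fieldType.
Implicit Types (x y : 'I_6 -> F) (t : F).

Lemma regular4_eq x y : x =1 y -> regular4 x <-> regular4 y.
Proof.
have genJ_eq x' y' : x' =1 y' -> genJ x' =1 genJ y'.
  by move=> E [[[C u] v] w]; rewrite /genJ /relLR !E.
have inJ_eq x' y' l : x' =1 y' -> inJ x' 4 l -> inJ y' 4 l.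
  move=> E /inJE[gs [vgs J]]; apply/inJE; exists gs; split=> // m; rewrite J.
  by apply: eq_bigr => q _; rewrite (genJ_eq _ _ E).
move=> E; split=> -[phi [act onto ker]]; exists phi; split=> // l Tl; rewrite ker //.
  by split; apply: inJ_eq.
by split; apply: inJ_eq => i; rewrite E.
Qed.

Lemma xsingle_support x : (forall i j, x i != 0 -> x j != 0 -> i = j) ->
  exists k t, (k < 6)%N /\ x =1 xsingle k t.
Proof.
move=> hx; case: (pickP (fun i => x i != 0)) => [i xi|x0]; last first.
  by exists 0%N, 0; split=> // j; rewrite /xsingle if_same; apply/eqP/negbFE/x0.
exists (val i), (x i); split=> [|j]; rewrite /xsingle ?ltn_ord //.
case: eqP => [/val_inj -> //|ne]; apply/eqP; apply: contraT => xj.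
by case: ne; rewrite (hx _ _ xj xi).
Qed.

Lemma eq_xsingle k t k' t' : (k < 6)%N -> t != 0 -> xsingle k t =1 xsingle k' t' ->
  k = k' /\ t = t'.
Proof.
move=> k6 t0 /(_ (inord k)); rewrite /xsingle /= inordK // eqxx.
by case: eqP => [<-|_ t0']; [split | rewrite t0' eqxx in t0].
Qed.

End Support.

Theorem mainTheorem9 (F : fieldType) (charF0 : [pchar F] =i pred0) (x : 'I_6 -> F)
  (hx : forall i j : 'I_6, x i != 0 -> x j != 0 -> i = j) :
  regular4 x <->
  ((forall i : 'I_6, x i = if val i == 0%N then 1 else 0) \/
   (exists s : F, [/\ s != 1, s != -1 &
      forall i : 'I_6, x i = if val i == 4%N then s else 0])).
Proof.
(* The argument does not use the characteristic. *)
have [k [t [k6 xE]]] := xsingle_support hx; rewrite (regular4_eq xE).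
have xsE k' t' : x =1 xsingle k' t' <-> xsingle k t =1 xsingle k' t'.
  by split=> E i; rewrite -E xE.
have [t0|t0] := eqVneq t 0.
  have x0 : xsingle k t =1 xsingle 4 0 by move=> i; rewrite t0 /xsingle !if_same.
  split=> _; last first.
    by rewrite (regular4_eq x0); apply: regular4_rnf; right; rewrite expr0n eq_sym oner_eq0.
  right; exists 0; rewrite eq_sym oner_eq0 eq_sym oppr_eq0 oner_eq0.
  by split=> // i; rewrite xE x0.
rewrite regular4_xsingle //; split.
  case=> [[k0 t1]|[k4 t2]]; first by left => i; rewrite xE k0 t1.
  right; exists t; split; last by move=> i; rewrite xE k4.
    by apply: contraNneq t2 => ->; rewrite expr1n.
  by apply: contraNneq t2 => ->; rewrite sqrrN expr1n.
case=> [/xsE/eq_xsingle[] // -> ->|[s [s1 s2 /xsE/eq_xsingle[] // -> ->]]]; first by left.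
by right; split=> //; rewrite sqrf_eq1 negb_or s1.
Qed.
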